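(* Let $\mathcal{F}(\mathsf{REG},\mathsf{REG})$ be the class of all languages $L(\Phi)$ generated by F-systems $\Phi=(L_1,L_2)$ in which both the core language $L_1$ and the folding procedure language $L_2$ are regular. Then $\mathcal{F}(\mathsf{REG},\mathsf{REG})\neq\mathsf{LIN}$; specifically, the linear language $L$ over $\{a,b,c,d,e,f,\#\}$ generated by the grammar $S\to S_1\mid S_2$, $S_1\to aS_1bc\mid a\#bc$, $S_2\to deS_2f\mid de\#f$ (that is, $L=\{a^n\#(bc)^n\mid n\ge1\}\cup\{(de)^n\#f^n\mid n\ge1\}$) is not in $\mathcal{F}(\mathsf{REG},\mathsf{REG})$.
   Context: Let $\Sigma$ be a finite alphabet and $\Gamma=\{\mathtt{u},\mathtt{d}\}$. Define $f:\Sigma^*\times\Sigma\times\Gamma\to\Sigma^*$ by $f(x,a,\mathtt{u})=ax$ and $f(x,a,\mathtt{d})=xa$. The folding function $h:\Sigma^*\times\Gamma^*\to\Sigma^*$ is the partial function with $h(\varepsilon,\varepsilon)=\varepsilon$; if $|w|=|v|>0$ with $w=w'a$ ($a\in\Sigma$) and $v=v'b$ ($b\in\Gamma$), then $h(w,v)=f(h(w',v'),a,b)$; and $h(w,v)$ is undefined if $|w|\neq|v|$. An F-system is a pair $\Phi=(L_1,L_2)$ with $L_1\subseteq\Sigma^*$ and $L_2\subseteq\Gamma^*$; its language is $L(\Phi)=\{h(w,v)\mid w\in L_1, v\in L_2, |w|=|v|\}$. A linear grammar is a context-free grammar all of whose rules have the form $A\to uBv$ or $A\to u$ with $u,v$ terminal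 words and $A,B$ nonterminals; $\mathsf{LIN}$ is the class of languages generated by linear grammars, and $\mathsf{REG}$ the class of regular languages. *)

From Stdlib Require List.
From mathcomp Require Import all_boot.
Set Implicit Arguments.
Unset Strict Implicit.
Unset Printing Implicit Defensive.

Definition language (Sigma : Type) := seq Sigma -> Prop.

Definition dfa_accepts (Sigma : Type) (Q : finType) (q0 : Q) (delta : Q -> Sigma -> Q)
  (fin : Q -> bool) (w : seq Sigma) : bool :=
  fin (foldl delta q0 w).

Definition is_regular (Sigma : Type) (L : language Sigma) : Prop :=
  exists (Q : finType) (q0 : Q) (delta : Q -> Sigma -> Q) (fin : Q -> bool),
    forall w, L w <-> dfa_accepts q0 delta fin w.

(* A rule A -> u B v  is  (A, inl (u, B, v)); a rule A -> u is (A, inr u). *)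
Record linear_grammar (Sigma : Type) := LinGrammar {
  lg_nonterm : Type;
  lg_start : lg_nonterm;
  lg_rules : seq (lg_nonterm * ((seq Sigma * lg_nonterm * seq Sigma) + seq Sigma))
}.

Inductive derives (Sigma : Type) (G : linear_grammar Sigma) :
    lg_nonterm G -> seq Sigma -> Prop :=
  | derives_term : forall A u,
      List.In (A, inr u) (lg_rules G) -> derives (G:=G) A u
  | derives_lin : forall A u B v w,
      List.In (A, inl (u, B, v)) (lg_rules G) -> derives (G:=G) B w ->
      derives (G:=G) A (u ++ w ++ v).

Definition grammar_language (Sigma : Type) (G : linear_grammar Sigma) : language Sigma :=
  fun w => derives (G:=G) (lg_start G) w.

Definition is_LIN (Sigma : Type) (L : language Sigma) : Prop :=
  exists G : linear_grammar Sigma, forall w, L w <-> grammar_language G w.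

Inductive updown := up | down.

Definition ffold (Sigma : Type) (x : seq Sigma) (a : Sigma) (b : updown) : seq Sigma :=
  match b with up => a :: x | down => rcons x a end.

(* The folding function h on words of equal length:
   h(eps,eps) = eps, h(w'a, v'b) = f(h(w',v'), a, b).  (Undefined otherwise.) *)
Fixpoint hfold_rev (Sigma : Type) (w : seq Sigma) (v : seq updown) : option (seq Sigma) :=
  (* w, v given reversed: last letters first *)
  match w, v with
  | [::], [::] => Some [::]
  | a :: w', b :: v' =>
      match hfold_rev w' v' with Some x => Some (ffold x a b) | None => None end
  | _, _ => None
  end.

Definition hfold (Sigma : Type) (w : seq Sigma) (v : seq updown) : option (seq Sigma) :=
  hfold_rev (rev w) (rev v).

Definition F_language (Sigma : Type) (L1 : language Sigma) (L2 : language updown)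
  : language Sigma :=
  fun x => exists w v, L1 w /\ L2 v /\ size w = size v /\ hfold w v = Some x.

Definition in_F_REG_REG (Sigma : Type) (L : language Sigma) : Prop :=
  exists (L1 : language Sigma) (L2 : language updown),
    is_regular L1 /\ is_regular L2 /\ forall x, L x <-> F_language L1 L2 x.

Inductive sym := sa | sb | sc | sd | se | sf | shash.

Definition L_ex : language sym :=
  fun x => exists n, 1 <= n /\
    (x = nseq n sa ++ shash :: flatten (nseq n [:: sb; sc])
     \/ x = flatten (nseq n [:: sd; se]) ++ shash :: nseq n sf).

Inductive NT := NS | NS1 | NS2.
Definition G_ex : linear_grammar sym :=
  @LinGrammar sym NT NS
    [:: (NS, inl ([::], NS1, [::]));
        (NS, inl ([::], NS2, [::]));
        (NS1, inl ([:: sa], NS1, [:: sb; sc]));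
        (NS1, inr [:: sa; shash; sb; sc]);
        (NS2, inl ([:: sd; se], NS2, [:: sf]));
        (NS2, inr [:: sd; se; shash; sf])].

(* Folding w along v reads the letters of w marked u backwards, then those marked d
   forwards, so folding permutes letters.  Suppose L = L(L1, L2) with L1, L2 regular and
   fold w1 v1 = a^n#(bc)^n, fold w2 v2 = (de)^n#f^n.  As |w2| = |v1|, fold w2 v1 is also
   in L, and it contains d.  Once n exceeds the number of state triples of the automata
   run on w1, w2 and v1, some segment [i, j) can be doubled in all three words at once.
   Doubling it in a folded word doubles a block B (segment letters marked u) and a block
   D (those marked d), with |B| and |D| depending on v1 only.  # occurs once in every word
   of L, so it lies outside B and D, and its position determines the length of the word:
   in a^n#(bc)^n it is a third of the way, in (de)^n#f^n two thirds.  This forces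
   |D| = 2|B| for w1 and |B| = 2|D| for w2, so the segment is empty. *)

From HB Require Import structures.
From mathcomp Require Import all_boot zify.
Set Implicit Arguments.
Unset Strict Implicit.
Unset Printing Implicit Defensive.

Definition pump (T : Type) (s : seq T) i j := take j s ++ drop i (take j s) ++ drop j s.

Lemma take_cat_segment (T : Type) (s : seq T) i j : i <= j ->
  take i s ++ drop i (take j s) = take j s.
Proof. by move=> ij; rewrite -{1}(take_takel s ij) cat_take_drop. Qed.

Lemma foldl_pump (T Q : Type) (delta : Q -> T -> Q) q (s : seq T) i j : i <= j ->
  foldl delta q (take i s) = foldl delta q (take j s) ->
  foldl delta q (pump s i j) = foldl delta q s.
Proof.
move=> ij loop; have segment_loop : foldl delta (foldl delta q (take j s)) (drop i (take j s)) =
    foldl delta q (take j s) by rewrite -loop -foldl_cat take_cat_segment.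
by rewrite -{2}(cat_take_drop j s) /pump !foldl_cat segment_loop.
Qed.

Lemma size_pump_eq (T U : Type) (w : seq T) (u : seq U) i j :
  size w = size u -> size (pump w i j) = size (pump u i j).
Proof. by move=> wu; rewrite !size_cat !size_drop !size_take wu. Qed.

Lemma dfa_language_pump (T : Type) (Q : finType) (q0 : Q) delta fin (L : language T) :
  (forall w, L w <-> dfa_accepts q0 delta fin w) ->
  forall w i j, i <= j -> foldl delta q0 (take i w) = foldl delta q0 (take j w) ->
  L w -> L (pump w i j).
Proof. by move=> LE w i j le_ij loop /LE Lw; apply/LE; rewrite /dfa_accepts foldl_pump. Qed.

Lemma mem_flatten_nseq (T : eqType) (x : T) n s : x \in flatten (nseq n s) -> x \in s.
Proof. by elim: n => //= n IH; rewrite mem_cat => /orP[|/IH]. Qed.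

Lemma flatten_nseqS (T : Type) n (s : seq T) : flatten (nseq n.+1 s) = flatten (nseq n s) ++ s.
Proof. by rewrite -addn1 nseqD flatten_cat /= cats0. Qed.

Lemma size_flatten_nseq (T : Type) n (s : seq T) : size (flatten (nseq n s)) = size s * n.
Proof. by rewrite size_flatten /shape map_nseq sumn_nseq. Qed.

Lemma index_pump (T : eqType) (x : T) A B C D E : x \notin B -> x \notin D ->
  let i := index x (A ++ B ++ C ++ D ++ E) in
  let i' := index x (A ++ B ++ B ++ C ++ D ++ D ++ E) in
  [\/ i' = i, i' = i + size B | i' = i + size B + size D].
Proof.
move=> /negbTE xB /negbTE xD /=; rewrite !index_cat xB xD.
case: (x \in A); first by constructor 1.
by case: (x \in C); [constructor 2 | constructor 3]; lia.
Qed.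

Lemma pigeonhole_nat (T : finType) (f : nat -> T) : exists i j, i < j <= #|T| /\ f i = f j.
Proof.
have : ~~ injectiveb (fun k : 'I_#|T|.+1 => f k).
  by apply/injectiveP => /leq_card; rewrite card_ord ltnn.
case/injectivePn => i [j] neq_ij fij.
case: (ltngtP i j) => [lt_ij | lt_ji | /val_inj eq_ij]; last by rewrite eq_ij eqxx in neq_ij.
- by exists i, j; rewrite lt_ij -ltnS ltn_ord.
- by exists j, i; rewrite lt_ji -ltnS ltn_ord.
Qed.

Definition is_up (b : updown) : bool := if b is up then true else false.

Section Folding.
Variable T : Type.
Implicit Types (w : seq T) (v : seq updown).

Definition ups w v := mask (map is_up v) w.
Definition downs w v := mask (map (predC is_up) v) w.
Definition fold w v := rev (ups w v) ++ downs w v.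

Lemma size_ups w v : size w = size v -> size (ups w v) = count is_up v.
Proof. by move=> wv; rewrite size_mask ?size_map // count_map. Qed.

Lemma size_downs w v : size w = size v -> size (downs w v) = count (predC is_up) v.
Proof. by move=> wv; rewrite size_mask ?size_map // count_map. Qed.

Lemma fold_cat w1 w2 v1 v2 : size w1 = size v1 ->
  fold (w1 ++ w2) (v1 ++ v2) = rev (ups w2 v2) ++ fold w1 v1 ++ downs w2 v2.
Proof.
move=> wv1; rewrite /fold /ups /downs !map_cat !mask_cat ?size_map //.
by rewrite rev_cat -!catA.
Qed.

Lemma hfold_rev_fold w v : size w = size v -> hfold_rev w v = Some (fold (rev w) (rev v)).
Proof.
elim: w v => [|a w IH] [|b v] //= [] wv; rewrite IH // !rev_cons -!cats1 fold_cat ?size_rev //.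
by case: b; rewrite /= ?cats0 ?cats1.
Qed.

Lemma hfold_fold w v : size w = size v -> hfold w v = Some (fold w v).
Proof. by move=> wv; rewrite /hfold hfold_rev_fold ?revK // !size_rev. Qed.

Lemma fold_pump w v i j : size w = size v -> i <= j ->
  exists A B C D E, [/\ fold w v = A ++ B ++ C ++ D ++ E,
    fold (pump w i j) (pump v i j) = A ++ B ++ B ++ C ++ D ++ D ++ E,
    size B = count is_up (drop i (take j v)) &
    size D = count (predC is_up) (drop i (take j v))].
Proof.
move=> wv ij; set sw := drop i (take j w); set sv := drop i (take j v).
have size_take_wv k : size (take k w) = size (take k v) by rewrite !size_take wv.
have size_seg : size sw = size sv by rewrite !size_drop size_take_wv.
have fold_take_j : fold (take j w) (take j v) =
    rev (ups sw sv) ++ fold (take i w) (take i v) ++ downs sw sv.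
  by rewrite -(take_cat_segment w ij) -(take_cat_segment v ij) fold_cat.
exists (rev (ups (drop j w) (drop j v))), (rev (ups sw sv)), (fold (take i w) (take i v)),
  (downs sw sv), (downs (drop j w) (drop j v)); split.
- by rewrite -{1}(cat_take_drop j w) -{1}(cat_take_drop j v) fold_cat // fold_take_j -!catA.
- rewrite /pump !catA fold_cat; last by rewrite !size_cat size_take_wv size_seg.
  by rewrite fold_cat // fold_take_j -!catA.
- by rewrite size_rev size_ups.
- by rewrite size_downs.
Qed.

End Folding.

Lemma perm_ups_downs (T : eqType) (w : seq T) v :
  size w = size v -> perm_eq (ups w v ++ downs w v) w.
Proof.
elim: w v => [|a w IH] [|b v] //= [] /IH; rewrite /ups /downs.
by case: b => /=; rewrite ?perm_cons // -cat1s perm_catCA /= perm_cons.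
Qed.

Lemma perm_fold (T : eqType) (w : seq T) v : size w = size v -> perm_eq (fold w v) w.
Proof. by move/perm_ups_downs; apply: perm_trans; rewrite perm_cat2r perm_rev. Qed.

Scheme Equality for sym.
HB.instance Definition _ := hasDecEq.Build sym (compareP sym_eq_dec).

Definition abc_word n := nseq n sa ++ shash :: flatten (nseq n [:: sb; sc]).
Definition def_word n := flatten (nseq n [:: sd; se]) ++ shash :: nseq n sf.

Lemma abc_wordS n : abc_word n.+1 = [:: sa] ++ abc_word n ++ [:: sb; sc].
Proof. by rewrite /abc_word flatten_nseqS /= -catA. Qed.

Lemma def_wordS n : def_word n.+1 = [:: sd; se] ++ def_word n ++ [:: sf].
Proof.
rewrite /def_word; have -> : nseq n.+1 sf = nseq n sf ++ [:: sf] by rewrite -addn1 nseqD.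
by rewrite -!catA.
Qed.

Lemma size_abc_word n : size (abc_word n) = 3 * n + 1.
Proof. rewrite size_cat /= size_nseq size_flatten_nseq /=; lia. Qed.

Lemma size_def_word n : size (def_word n) = 3 * n + 1.
Proof. rewrite size_cat /= size_nseq size_flatten_nseq /=; lia. Qed.

Lemma index_abc_word n : index shash (abc_word n) = n.
Proof. by rewrite index_pivot ?size_nseq // mem_nseq andbF. Qed.

Lemma index_def_word n : index shash (def_word n) = 2 * n.
Proof.
rewrite index_pivot ?size_flatten_nseq 1?mulnC //.
by apply/negP => /mem_flatten_nseq.
Qed.

Lemma count_hash_L_ex z : L_ex z -> count_mem shash z = 1.
Proof.
by case=> n [_ [->|->]]; rewrite count_cat /= count_flatten map_nseq sumn_nseq count_nseq /=; lia.
Qed.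

Lemma L_ex_abc z : L_ex z -> sa \in z -> size z = 3 * index shash z + 1.
Proof.
case=> n [_ [->|->]]; first by rewrite size_abc_word index_abc_word.
by rewrite mem_cat in_cons mem_nseq => /or3P[/mem_flatten_nseq|//|/andP[]]; rewrite ?inE.
Qed.

Lemma L_ex_def z : L_ex z -> sd \in z -> 2 * size z = 3 * index shash z + 2.
Proof.
case=> n [_ [->|->]]; last by rewrite size_def_word index_def_word; lia.
by rewrite mem_cat in_cons mem_nseq => /or3P[/andP[]|//|/mem_flatten_nseq]; rewrite ?inE.
Qed.

Lemma L_ex_pump A B C D E :
  let s := A ++ B ++ C ++ D ++ E in
  L_ex s -> L_ex (A ++ B ++ B ++ C ++ D ++ D ++ E) ->
  (sa \in s -> size D = 2 * size B) /\ (sd \in s -> size B = 2 * size D).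
Proof.
move=> s Ls; set z := A ++ B ++ B ++ C ++ D ++ D ++ E => Lz.
have [/count_memPn hashB /count_memPn hashD] : count_mem shash B = 0 /\ count_mem shash D = 0.
  by move: (count_hash_L_ex Ls) (count_hash_L_ex Lz); rewrite /s /z !count_cat; lia.
have size_z : size z = size s + size B + size D by rewrite /z /s !size_cat; lia.
have s_sub_z : {subset s <= z}.
  by move=> x; rewrite !mem_cat; case: (x \in B); case: (x \in D); rewrite /= ?orbT.
have index_z : [\/ index shash z = index shash s, index shash z = index shash s + size B
    | index shash z = index shash s + size B + size D] := index_pump A C E hashB hashD.
split=> [a_s | d_s].
- move: (L_ex_abc Ls a_s) (L_ex_abc Lz (s_sub_z _ a_s)); rewrite size_z.
  by case: index_z => ->; lia.
- move: (L_ex_def Ls d_s) (L_ex_def Lz (s_sub_z _ d_s)); rewrite size_z.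
  by case: index_z => ->; lia.
Qed.

Section FSystemForLex.
Variables (L1 : language sym) (L2 : language updown).
Hypothesis L_exE : forall x, L_ex x <-> F_language L1 L2 x.

Lemma L_ex_fold w v : L1 w -> L2 v -> size w = size v -> L_ex (fold w v).
Proof. by move=> Lw Lv wv; apply/L_exE; exists w, v; rewrite hfold_fold. Qed.

Lemma L_ex_unfold x : L_ex x -> exists w v, [/\ L1 w, L2 v, size w = size v & fold w v = x].
Proof. by case/L_exE => w [v [Lw [Lv [wv]]]]; rewrite hfold_fold // => -[<-]; exists w, v. Qed.

Lemma L_ex_fold_pump w v i j : L1 w -> L2 v -> size w = size v -> i <= j ->
  L1 (pump w i j) -> L2 (pump v i j) ->
  let ups_seg := count is_up (drop i (take j v)) in
  let downs_seg := count (predC is_up) (drop i (take j v)) in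
  (sa \in w -> downs_seg = 2 * ups_seg) /\ (sd \in w -> ups_seg = 2 * downs_seg).
Proof.
move=> Lw Lv wv le_ij Lw' Lv' /=.
have [A [B [C [D [E [fold_wv fold_wv' <- <-]]]]]] := fold_pump wv le_ij.
have := L_ex_fold Lw Lv wv; have := L_ex_fold Lw' Lv' (size_pump_eq i j wv).
rewrite fold_wv' -!(perm_mem (perm_fold wv)) fold_wv => Lz Ls.
exact: L_ex_pump.
Qed.

End FSystemForLex.

Definition G_ex_language (A : NT) : language sym :=
  match A with
  | NS => L_ex
  | NS1 => fun w => exists2 n, 0 < n & w = abc_word n
  | NS2 => fun w => exists2 n, 0 < n & w = def_word n
  end.

Lemma derives_G_ex A w : derives (G:=G_ex) A w -> G_ex_language A w.
Proof.
elim=> {A w} [A u | A u B v w rule _ IH] /=.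
  by case=> [|[|[|[[<- <-]|[|[[<- <-]|[]]]]]]] //; exists 1.
move: IH; case: rule => [|[|[|[|[|[|[]]]]]]] // [<- <- <- <-] /= [n n_gt0 ->].
- by exists n; split=> //; left; rewrite cats0.
- by exists n; split=> //; right; rewrite cats0.
- by exists n.+1; rewrite ?abc_wordS.
- by exists n.+1; rewrite ?def_wordS.
Qed.

Lemma derives_abc_word n : derives (G:=G_ex) NS1 (abc_word n.+1).
Proof.
elim: n => [|n IH]; first by apply: derives_term; rewrite /=; tauto.
by rewrite abc_wordS; apply: derives_lin IH; rewrite /=; tauto.
Qed.

Lemma derives_def_word n : derives (G:=G_ex) NS2 (def_word n.+1).
Proof.
elim: n => [|n IH]; first by apply: derives_term; rewrite /=; tauto.
by rewrite def_wordS; apply: derives_lin IH; rewrite /=; tauto.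
Qed.

Lemma G_ex_L_ex x : grammar_language G_ex x <-> L_ex x.
Proof.
split; first exact: (@derives_G_ex NS).
have start_rule B w : List.In (NS, inl ([::], B, [::])) (lg_rules G_ex) ->
    derives (G:=G_ex) B w -> grammar_language G_ex w.
  by move=> rule /(@derives_lin _ G_ex NS [::] B [::] w rule); rewrite cats0.
case=> -[|n] [// _ [->|->]].
- by apply: start_rule (derives_abc_word n); rewrite /=; tauto.
- by apply: start_rule (derives_def_word n); rewrite /=; tauto.
Qed.

Lemma L_ex_not_in_F_REG_REG : ~ in_F_REG_REG L_ex.
Proof.
move=> [L1 [L2 [[Q1 [q1 [d1 [f1 reg1]]]] [[Q2 [q2 [d2 [f2 reg2]]]] L_exE]]]].
pose n := #|{: Q1 * Q1 * Q2}|.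
have n_gt0 : 0 < n by apply/card_gt0P; exists (q1, q1, q2).
have [w1 [v [Lw1 Lv wv1 fold1]]] :
    exists w v, [/\ L1 w, L2 v, size w = size v & fold w v = abc_word n].
  by apply: (L_ex_unfold L_exE); exists n; split=> //; left.
have [w2 [v2 [Lw2 _ wv2 fold2]]] :
    exists w v, [/\ L1 w, L2 v, size w = size v & fold w v = def_word n].
  by apply: (L_ex_unfold L_exE); exists n; split=> //; right.
have size_v : size v = 3 * n + 1 by rewrite -wv1 -(perm_size (perm_fold wv1)) fold1 size_abc_word.
have w2v : size w2 = size v by rewrite -(perm_size (perm_fold wv2)) fold2 size_def_word.
have a_w1 : sa \in w1 by rewrite -(perm_mem (perm_fold wv1)) fold1; case: (n) n_gt0.
have d_w2 : sd \in w2 by rewrite -(perm_mem (perm_fold wv2)) fold2; case: (n) n_gt0.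
have [i [j [/andP[lt_ij le_jn] [loop1 loop2 loopv]]]] := pigeonhole_nat
  (fun k => (foldl d1 q1 (take k w1), foldl d1 q1 (take k w2), foldl d2 q2 (take k v))).
have le_ij := ltnW lt_ij; rewrite -/n in le_jn.
have [+ _] := L_ex_fold_pump L_exE Lw1 Lv wv1 le_ij
  (dfa_language_pump reg1 le_ij loop1 Lw1) (dfa_language_pump reg2 le_ij loopv Lv).
have [_ +] := L_ex_fold_pump L_exE Lw2 Lv w2v le_ij
  (dfa_language_pump reg1 le_ij loop2 Lw2) (dfa_language_pump reg2 le_ij loopv Lv).
have := count_predC is_up (drop i (take j v)).
rewrite size_drop size_takel ?size_v /=; last lia.
move=> seg_size /(_ d_w2) ups_def /(_ a_w1) downs_abc; lia.
Qed.

Theorem theorem2 :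
  (forall x, grammar_language G_ex x <-> L_ex x) /\
  is_LIN L_ex /\
  ~ in_F_REG_REG L_ex /\
  (fun L : language sym => in_F_REG_REG L) <> (fun L : language sym => is_LIN L).
Proof.
have L_ex_LIN : is_LIN L_ex by exists G_ex => x; rewrite G_ex_L_ex.
split; first exact: G_ex_L_ex.
split; first exact: L_ex_LIN.
split; first exact: L_ex_not_in_F_REG_REG.
by move=> /(congr1 (fun P => P L_ex)) /= F_eq_LIN; apply: L_ex_not_in_F_REG_REG; rewrite F_eq_LIN.
Qed.
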